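(* Let $B$ and $W$ be independent standard real-valued Brownian motions. Then $$\frac{1}{4\pi^2}\int_{[0,1]^4}\int_{\mathbb{R}^2} p_1^2 p_2^2\, \mathbb{E}\!\left[e^{ip_1(B_{t_1}-W_{s_1}) + ip_2(B_{t_2}-W_{s_2})}\right] dp_1\,dp_2\,ds_1\,ds_2\,dt_1\,dt_2 = +\infty .$$ (The integrand is nonnegative, so the integral is well defined in $[0,\infty]$.) In particular, the second-order derivative intersection local time $L_{2,1,1} = \frac{i^2}{2\pi}\int_0^1\int_0^1\int_{\mathbb{R}} p^2 e^{ip(B_t - W_s)}\,dp\,ds\,dt$ of $B$ and $W$ (the case $d=1$, $k=2$, $T=1$, $H_1=H_2=\tfrac12$) does not have a finite second moment.
   Context: This serves as a counterexample to a claimed result that, for independent fractional Brownian motions with Hurst parameters $H_1,H_2$ and $\frac{H_1H_2}{H_1+H_2}(|k|+d)<1$, the $k$-th order derivative intersection local time exists in every $L^p$ and is exponentially integrable; with $d=1$, $k=2$, $H_1=H_2=\tfrac12$ this condition holds. The displayed integral is the formal expression for $\mathbb{E}[L_{2,1,1}^2]$. *)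

From HB Require Import structures.
From mathcomp Require Import all_boot all_order all_algebra.
From mathcomp Require Import all_classical all_reals all_analysis.
Set Implicit Arguments. Unset Strict Implicit. Unset Printing Implicit Defensive.
Import Order.TTheory GRing.Theory Num.Theory.
Import numFieldNormedType.Exports.
Local Open Scope classical_set_scope.
Local Open Scope ring_scope.

(* Two processes B W indexed by time t >= 0, defined on the probability space P,
   are a pair of independent standard real Brownian motions:
   - each B t, W t is a random variable (measurable);
   - every path t |-> B t w, t |-> W t w is continuous on [0, +oo);
   - the finite-dimensional distributions of (B, W) are those of two independent
     centered Gaussian processes with covariance min(s,t), expressed via the
     joint characteristic function
       E[exp(i (sum_k a_k B_{t_k} + sum_k b_k W_{s_k}))]
         = exp(-1/2 sum a_j a_k min(t_j,t_k) - 1/2 sum b_j b_k min(s_j,s_k)),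
     written through its real part (E[cos]) and imaginary part (E[sin]). *)
Definition indep_std_BM_pair {d} {T : measurableType d} {R : realType}
  (P : probability T R) (B W : R -> T -> R) : Prop :=
  (forall t, measurable_fun setT (B t)) /\
  (forall t, measurable_fun setT (W t)) /\
  (forall w, {within `[0, +oo[, continuous (fun t => B t w)}) /\
  (forall w, {within `[0, +oo[, continuous (fun t => W t w)}) /\
  (forall (n : nat) (tB tW a b : 'I_n -> R),
     (forall i, 0 <= tB i) -> (forall i, 0 <= tW i) ->
     let X := fun w => \sum_(i < n) a i * B (tB i) w + \sum_(i < n) b i * W (tW i) w in
     let v := \sum_(i < n) \sum_(j < n) a i * a j * Num.min (tB i) (tB j)
            + \sum_(i < n) \sum_(j < n) b i * b j * Num.min (tW i) (tW j) in
     (\int[P]_w (cos (X w))%:E = (expR (- (v / 2)))%:E)%E /\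
     (\int[P]_w (sin (X w))%:E = 0)%E).

From HB Require Import structures.
From mathcomp Require Import all_boot all_order all_algebra.
From mathcomp Require Import all_classical all_reals all_analysis.
From mathcomp Require Import ring lra.
Import Order.TTheory GRing.Theory Num.Theory.
Import numFieldNormedType.Exports.
Local Open Scope classical_set_scope.
Local Open Scope ring_scope.

(* For t1 <= t2 and s1 <= s2 the characteristic function of the two
   increments is exp(-V/2) with V = (t1 + s1)(p1 + p2)^2 + (t2 - t1 + s2 - s1) p2^2,
   so the weight p1^2 p2^2 exp(-V/2) is of order a^4 on the box where p2 ~ a,
   |p1 + p2| <= 1/2, t2, s2 in [1/2, 1] and t1, s1 lie within e = 1/(8 a^2) below
   t2, s2.  That box has volume of order a e^2 = 1/a^3, hence the integral is at
   least a constant times a for every a >= 1. *)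

(* Iterated integrals are not known to be measurable in their outer variables,
   so [ge0_le_integral] cannot be used. *)
Lemma ge0_le_integral_nonmeas {d} {T : measurableType d} {R : realType}
    (mu : {measure set T -> \bar R}) {D : set T} {f g : T -> \bar R} :
  (forall x, D x -> (0 <= f x)%E) -> (forall x, D x -> (f x <= g x)%E) ->
  (\int[mu]_(x in D) f x <= \int[mu]_(x in D) g x)%E.
Proof.
move=> f0 fg.
have g0 x : D x -> (0 <= g x)%E by move=> Dx; exact: le_trans (f0 _ Dx) (fg _ Dx).
rewrite !ge0_integralE//; apply: ereal_sup_le => _ [h hf <-]; exists h => //= x.
apply: le_trans (hf x) _; rewrite /patch; case: ifP => // /[!inE] Dx; exact: fg.
Qed.

Lemma itv_length_le_integral {R : realType} (D : set R) (f : R -> \bar R) (l r c : R) :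
  measurable D -> (forall x, D x -> (0 <= f x)%E) -> `[l, r] `<=` D -> l <= r ->
  (forall x, l <= x <= r -> (c%:E <= f x)%E) ->
  ((c * (r - l))%:E <= \int[lebesgue_measure]_(x in D) f x)%E.
Proof.
move=> mD f0 lrD lr cf.
have [c_lt0|c0] := ltP c 0.
  apply: (@le_trans _ _ 0%E); last exact: integral_ge0.
  by rewrite lee_fin nmulr_rle0 // subr_ge0.
have box_le_f x : D x -> ((c * \1_`[l, r] x)%:E <= f x)%E.
  rewrite indicE; case: (boolP (x \in _)) => [|_ Dx]; last by rewrite mulr0 f0.
  by rewrite mulr1 inE /= in_itv => /cf.
apply: (le_trans _ (ge0_le_integral_nonmeas lebesgue_measure _ box_le_f)).
  2: by move=> x _; rewrite lee_fin mulr_ge0 ?indic_ge0.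
have /= -> := @integralZl_indic _ _ _ lebesgue_measure _ mD (fun=> `[l, r]%classic) c.
- rewrite integral_indic //= setIidl // lebesgue_measure_itv /= lte_fin.
  have [_|rl] := ltP l r; first by rewrite EFinM EFinB.
  have -> : r = l by apply/eqP; rewrite eq_le lr rl.
  by rewrite subrr mulr0 mule0.
- by move=> /(le_lt_trans c0); rewrite ltxx.
- exact: measurable_itv.
Qed.

Lemma linear_lbound_eqy {R : realType} {x : \bar R} {k : R} : 0 < k ->
  (forall a : R, 1 <= a -> ((k * a)%:E <= x)%E) -> x = +oo%E.
Proof.
move=> k0; case: x => [r| |] // kx; last by have := kx 1 (lexx _).
exfalso; have r_k0 : 0 <= `|r| / k by rewrite divr_ge0 // ltW.
have := kx (`|r| / k + 1); rewrite lee_fin mulrDr mulrCA divff ?gt_eqF // mulr1.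
have := ler_norm r; move=> + /(_ ltac:(lra)); lra.
Qed.

Definition bm_variance {R : realType} (t1 t2 s1 s2 p1 p2 : R) : R :=
  p1 ^+ 2 * t1 + 2 * p1 * p2 * Num.min t1 t2 + p2 ^+ 2 * t2
  + p1 ^+ 2 * s1 + 2 * p1 * p2 * Num.min s1 s2 + p2 ^+ 2 * s2.

Lemma bm_variance_sorted {R : realType} (t1 t2 s1 s2 p1 p2 : R) :
  t1 <= t2 -> s1 <= s2 ->
  bm_variance t1 t2 s1 s2 p1 p2
  = (t1 + s1) * (p1 + p2) ^+ 2 + ((t2 - t1) + (s2 - s1)) * p2 ^+ 2.
Proof. by move=> t12 s12; rewrite /bm_variance (min_idPl t12) (min_idPl s12); ring. Qed.

Lemma bm_variance_le2 {R : realType} (e t1 t2 s1 s2 p1 p2 : R) :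
  0 <= t1 <= t2 -> t2 <= 1 -> t2 - t1 <= e ->
  0 <= s1 <= s2 -> s2 <= 1 -> s2 - s1 <= e ->
  `|p1 + p2| <= 1 / 2 -> e * p2 ^+ 2 <= 1 / 2 ->
  bm_variance t1 t2 s1 s2 p1 p2 <= 2.
Proof.
move=> /andP[t10 t12] t21 t2e /andP[s10 s12] s21 s2e.
move=> p12 ep2; rewrite bm_variance_sorted //.
have q : (p1 + p2) ^+ 2 <= 1 / 4.
  by rewrite -real_normK ?num_real // (_ : 1 / 4 = (1 / 2) ^+ 2); [rewrite lerXn2r ?nnegrE | field].
have : 0 <= (p1 + p2) ^+ 2 := sqr_ge0 _.
have : 0 <= p2 ^+ 2 := sqr_ge0 _.
nra.
Qed.

Section independent_brownian_pair.
Context {d} {T : measurableType d} {R : realType}.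
Context {P : probability T R} {B W : R -> T -> R}.
Hypothesis BW : indep_std_BM_pair P B W.

Lemma BW_charfun2 {t1 t2 s1 s2 : R} (p1 p2 : R) :
  0 <= t1 -> 0 <= t2 -> 0 <= s1 -> 0 <= s2 ->
  (\int[P]_w (cos (p1 * (B t1 w - W s1 w) + p2 * (B t2 w - W s2 w)))%:E
    = (expR (- (bm_variance t1 t2 s1 s2 p1 p2 / 2)))%:E)%E /\
  (\int[P]_w (sin (p1 * (B t1 w - W s1 w) + p2 * (B t2 w - W s2 w)))%:E = 0)%E.
Proof.
move: BW => [_ [_ [_ [_ charf]]]] t10 t20 s10 s20.
pose tB i := nth 0 [:: t1; t2] i; pose tW i := nth 0 [:: s1; s2] i.
have tB0 (i : 'I_2) : 0 <= tB i by case: i => [[|[|]]].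
have tW0 (i : 'I_2) : 0 <= tW i by case: i => [[|[|]]].
have sum2 w : \sum_(i < 2) [:: p1; p2]`_i * B (tB i) w
    + \sum_(i < 2) [:: - p1; - p2]`_i * W (tW i) w
    = p1 * (B t1 w - W s1 w) + p2 * (B t2 w - W s2 w).
  by rewrite !big_ord_recr !big_ord0 /=; ring.
have [] := charf 2 tB tW (fun i => [:: p1; p2]`_i) (fun i => [:: - p1; - p2]`_i) tB0 tW0.
under eq_integral do rewrite sum2; move=> ->.
under eq_integral do rewrite sum2; move=> ->; split => //; congr (expR (- (_ / 2)))%:E.
by rewrite /bm_variance /tB /tW !big_ord_recr !big_ord0 /= !minxx (minC t2 t1) (minC s2 s1); ring.
Qed.

Definition moment_integrand (t1 t2 s1 s2 p1 p2 : R) : \bar R :=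
  ((p1 ^+ 2 * p2 ^+ 2)%:E *
   \int[P]_w (cos (p1 * (B t1 w - W s1 w) + p2 * (B t2 w - W s2 w)))%:E)%E.

Lemma moment_integrand_ge0 (t1 t2 s1 s2 p1 p2 : R) :
  0 <= t1 -> 0 <= t2 -> 0 <= s1 -> 0 <= s2 ->
  (0 <= moment_integrand t1 t2 s1 s2 p1 p2)%E.
Proof.
move=> t10 t20 s10 s20; rewrite /moment_integrand (BW_charfun2 p1 p2 t10 t20 s10 s20).1.
by rewrite -EFinM lee_fin mulr_ge0 ?expR_ge0 // mulr_ge0 ?sqr_ge0.
Qed.

Lemma moment_integrand_box (a e t1 t2 s1 s2 p1 p2 : R) :
  1 <= a -> e <= 1 / 2 -> e * (2 * a) ^+ 2 <= 1 / 2 ->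
  1 / 2 <= t2 <= 1 -> t2 - e <= t1 <= t2 -> 1 / 2 <= s2 <= 1 -> s2 - e <= s1 <= s2 ->
  a <= p2 <= 2 * a -> - p2 - 1 / 2 <= p1 <= - p2 + 1 / 2 ->
  ((a ^+ 4 / 4 * expR (-1))%:E <= moment_integrand t1 t2 s1 s2 p1 p2)%E.
Proof.
move=> a1 e_half ea /andP[t2l t2u] /andP[t1l t1u] /andP[s2l s2u] /andP[s1l s1u].
move=> /andP[p2l p2u] /andP[p1l p1u].
have [t10 t20 s10 s20] : [/\ 0 <= t1, 0 <= t2, 0 <= s1 & 0 <= s2] by split; lra.
rewrite /moment_integrand (BW_charfun2 p1 p2 t10 t20 s10 s20).1.
have var_le2 : bm_variance t1 t2 s1 s2 p1 p2 <= 2.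
  apply: (@bm_variance_le2 _ e); rewrite ?t1u ?s1u ?andbT; try lra.
  - by rewrite ler_norml; apply/andP; split; lra.
  - apply: le_trans ea; rewrite ler_wpM2l ?lerXn2r ?nnegrE //; lra.
rewrite -EFinM lee_fin ler_pM ?expR_ge0 ?ler_expR; try lra.
- by rewrite divr_ge0 // exprn_ge0 //; lra.
- have -> : a ^+ 4 / 4 = (a / 2) ^+ 2 * a ^+ 2 by field.
  have p1_sq : (a / 2) ^+ 2 <= p1 ^+ 2 by rewrite -(sqrrN p1) lerXn2r ?nnegrE; lra.
  have p2_sq : a ^+ 2 <= p2 ^+ 2 by rewrite lerXn2r ?nnegrE; lra.
  by rewrite ler_pM ?sqr_ge0.
Qed.

Ltac nested_integral_ge0 :=
  repeat first [ move=> ? /= /[!in_itv] /= /andP[? ?] | move=> ? _ | apply: integral_ge0 ];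
  apply: moment_integrand_ge0; lra.

Tactic Notation "itv_lower_bound" uconstr(l) uconstr(r) uconstr(c) :=
  match goal with |- is_true (Order.le (EFin ?k) _) =>
    rewrite (_ : k = c * (r - l)); last by field end;
  apply: itv_length_le_integral;
  [ by [] | nested_integral_ge0
  | first [ by [] | by move=> ? /= /[!in_itv] /= /andP[? ?]; apply/andP; split; lra ]
  | lra | ].

Lemma moment_sixfold_integral_ge (a : R) : 1 <= a ->
  ((expR (-1) / 1024 * a)%:E <=
   \int[lebesgue_measure]_(t2 in `[0%R, 1%R]) \int[lebesgue_measure]_(t1 in `[0%R, 1%R])
   \int[lebesgue_measure]_(s2 in `[0%R, 1%R]) \int[lebesgue_measure]_(s1 in `[0%R, 1%R])
   \int[lebesgue_measure]_(p2 in [set: R]) \int[lebesgue_measure]_(p1 in [set: R])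
     moment_integrand t1 t2 s1 s2 p1 p2)%E.
Proof.
move=> a1; pose e := (8 * a ^+ 2)^-1; pose C := a ^+ 4 / 4 * expR (-1).
have e0 : 0 < e by rewrite invr_gt0 mulr_gt0 // exprn_gt0 //; lra.
have e_a : e * (2 * a) ^+ 2 = 1 / 2 by rewrite /e; field; lra.
have e_small : e <= 1 / 8.
  have : 1 <= a ^+ 2 by rewrite expr_ge1 //; lra.
  nra.
have -> : expR (-1) / 1024 * a = C * a * e / 2 * e / 2 by rewrite /C /e; field; lra.
itv_lower_bound (1 / 2) 1 (C * a * e / 2 * e) => t2 /andP[t2l t2u].
itv_lower_bound (t2 - e) t2 (C * a * e / 2) => t1 /andP[t1l t1u].
itv_lower_bound (1 / 2) 1 (C * a * e) => s2 /andP[s2l s2u].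
itv_lower_bound (s2 - e) s2 (C * a) => s1 /andP[s1l s1u].
itv_lower_bound a (2 * a) C => p2 /andP[p2l p2u].
itv_lower_bound (- p2 - 1 / 2) (- p2 + 1 / 2) C => p1 /andP[p1l p1u].
by apply: (@moment_integrand_box a e); rewrite ?e_a ?t1u ?s1u ?p1u ?p2u ?t2u ?s2u ?andbT //; lra.
Qed.

End independent_brownian_pair.

Theorem mainTheorem5 (d : measure_display) (T : measurableType d) (R : realType)
  (P : probability T R) (B W : R -> T -> R) :
  indep_std_BM_pair P B W ->
  (* the integrand E[exp(i p1 (B_t1 - W_s1) + i p2 (B_t2 - W_s2))] is real and >= 0 *)
  (forall t1 t2 s1 s2 p1 p2 : R, 0 <= t1 -> 0 <= t2 -> 0 <= s1 -> 0 <= s2 ->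
     (\int[P]_w (sin (p1 * (B t1 w - W s1 w) + p2 * (B t2 w - W s2 w)))%:E = 0)%E /\
     (0 <= \int[P]_w (cos (p1 * (B t1 w - W s1 w) + p2 * (B t2 w - W s2 w)))%:E)%E) /\
  ((1 / (4 * pi ^+ 2))%:E *
   \int[lebesgue_measure]_(t2 in `[0%R, 1%R]) \int[lebesgue_measure]_(t1 in `[0%R, 1%R])
   \int[lebesgue_measure]_(s2 in `[0%R, 1%R]) \int[lebesgue_measure]_(s1 in `[0%R, 1%R])
   \int[lebesgue_measure]_(p2 in [set: R]) \int[lebesgue_measure]_(p1 in [set: R])
     ((p1 ^+ 2 * p2 ^+ 2)%:E *
      \int[P]_w (cos (p1 * (B t1 w - W s1 w) + p2 * (B t2 w - W s2 w)))%:E)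
   = +oo)%E.
Proof.
move=> BW; split.
  move=> t1 t2 s1 s2 p1 p2 t10 t20 s10 s20.
  have [-> ->] := BW_charfun2 BW p1 p2 t10 t20 s10 s20.
  by rewrite lee_fin expR_ge0.
have k0 : 0 < expR (-1) / 1024 :> R by have := expR_gt0 (-1 : R); lra.
rewrite (linear_lbound_eqy k0 (moment_sixfold_integral_ge BW)) gt0_muley // lte_fin.
by rewrite divr_gt0 ?mulr_gt0 ?exprn_gt0 ?pi_gt0 ?ltr0n.
Qed.
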